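(* For every $d\in\mathbb{N}$, $n(d)\le m(d)+d$.
   Context: Unit vectors $x_1,\dots,x_n\in\mathbb{C}^d$ form a weighted $2$-design for $\mathbb{CP}^{d-1}$ if there exist weights $w_1,\dots,w_n\ge 0$ such that $\sum_{k=1}^n w_k (x_k^{\otimes 2})(x_k^{\otimes 2})^*$ equals the orthogonal projection of $(\mathbb{C}^d)^{\otimes 2}$ onto the subspace of symmetric tensors. $n(d)$ denotes the smallest $n$ such that there exist $n$ unit vectors in $\mathbb{C}^d$ forming a weighted $2$-design for $\mathbb{CP}^{d-1}$. A Sidon set is a subset $S$ of a finite abelian group $G$ such that $a+b=c+d$ with $a,b,c,d\in S$ implies $\{a,b\}=\{c,d\}$. $m(d)$ denotes the smallest order $|G|$ of a finite abelian group $G$ containing a Sidon set of size $d$. *)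

From HB Require Import structures.
From mathcomp Require Import all_boot all_order all_algebra.
From mathcomp Require Import boolp reals complex.
Set Implicit Arguments. Unset Strict Implicit. Unset Printing Implicit Defensive.
Import Order.TTheory GRing.Theory Num.Theory.
Local Open Scope ring_scope.
Local Open Scope complex_scope.

(* Smallest natural number satisfying a (Prop) predicate; 0 if none exists
   (classical choice, as in the usual "min" of a set of naturals). *)
Definition least_nat (P : nat -> Prop) : nat :=
  match pselect (exists n, P n) with
  | left H => ex_minn (P := fun n => `[< P n >])
                (let: ex_intro n Pn := H in ex_intro _ n (asboolT Pn))
  | right _ => 0%N
  end.

Definition unit_vec (R : realType) (d : nat) (x : 'I_d -> R[i]) : Prop :=
  \sum_(i < d) `|x i| ^+ 2 = 1.

(* Entry ((i,j),(k,l)) of the orthogonal projection of (C^d)^{(x)2}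
   onto the symmetric tensors: (delta_ik delta_jl + delta_il delta_jk)/2. *)
Definition sym_proj (R : realType) (d : nat) (i j k l : 'I_d) : R[i] :=
  (((i == k) && (j == l))%:R + ((i == l) && (j == k))%:R) / 2.

(* The vectors x_1..x_n form a weighted 2-design for CP^{d-1}:
   there are weights w_k >= 0 with
   sum_k w_k (x_k (x) x_k)(x_k (x) x_k)^* = symmetric projection,
   written entrywise in the standard basis e_i (x) e_j of (C^d)^{(x)2};
   entry ((i,j),(k,l)) of (x(x)x)(x(x)x)^* is x_i x_j conj(x_k x_l). *)
Definition weighted_2design (R : realType) (d n : nat)
    (x : 'I_n -> 'I_d -> R[i]) : Prop :=
  exists w : 'I_n -> R,
    (forall t, 0 <= w t) /\
    forall i j k l : 'I_d,
      \sum_(t < n) (w t)%:C * (x t i * x t j * (x t k * x t l)^*)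
      = sym_proj R i j k l.

Definition n_design (R : realType) (d : nat) : nat :=
  least_nat (fun n => exists x : 'I_n -> 'I_d -> R[i],
                 (forall t, unit_vec (x t)) /\ weighted_2design x).

Definition sidon (G : finZmodType) (S : {set G}) : Prop :=
  forall a b c e, a \in S -> b \in S -> c \in S -> e \in S ->
    a + b = c + e -> [set a; b] = [set c; e].

Definition m_sidon (d : nat) : nat :=
  least_nat (fun m => exists G : finZmodType, #|G| = m /\
                 exists S : {set G}, #|S| = d /\ sidon S).

(* Let S = {s_1, ..., s_d} be a Sidon set in a finite abelian group G of order m.
   For each of the m characters chi of G take the unit vector
   d^{-1/2} (chi(s_1), ..., chi(s_d)) with weight d^2/(2m), and add the d standard
   basis vectors with weight 1/2.  By orthogonality of characters, entry
   ((i,j),(k,l)) of the first family sums to [s_i + s_j = s_k + s_l] / 2, which by the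
   Sidon property is [{i,j} = {k,l}] / 2.  This counts the case i = j = k = l once
   instead of twice, and the standard basis vectors supply exactly that missing
   [i = j = k = l] / 2, giving the symmetric projection. *)

From mathcomp Require Import all_boot all_order all_algebra all_fingroup all_solvable.
From mathcomp Require Import all_field all_character.
From mathcomp Require Import boolp reals complex.
From mathcomp Require Import ring zify.
Set Implicit Arguments. Unset Strict Implicit. Unset Printing Implicit Defensive.
Import Order.TTheory GRing.Theory Num.Theory.
Local Open Scope ring_scope.

Lemma prim_root_exists (C : numClosedFieldType) n :
  (0 < n)%N -> exists z : C, n.-primitive_root z.
Proof.
move=> n_gt0; have [r Dp] := closed_field_poly_normal ('X^n - 1 : {poly C}).
rewrite (monicP _) ?monicXnsubC // scale1r in Dp.
have rn1 : all n.-unity_root r by apply/allP=> z; rewrite -root_prod_XsubC -Dp.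
have sz_r : (n < (size r).+1)%N by rewrite -(size_prod_XsubC r id) -Dp size_XnsubC.
have [|z] := hasP (has_prim_root n_gt0 rn1 _ sz_r); last by exists z.
by rewrite -separable_prod_XsubC -Dp separable_Xn_sub_1 // pnatr_eq0 -lt0n.
Qed.

Section ZmodCharacters.
Variables (C : numClosedFieldType) (G : finZmodType).
Let H := [set: G]%G.

Lemma card_zmod_gt0 : (0 < #|G|)%N.
Proof. by rewrite -cardsT cardG_gt0. Qed.

Lemma zmod_lin_char (i : Iirr H) : 'chi_i \is a linear_char.
Proof. exact/char_abelianP/FinRing.zmod_abelian. Qed.

Lemma card_Iirr_zmod : #|Iirr H| = #|G|.
Proof. by rewrite card_Iirr_abelian ?cardsT // FinRing.zmod_abelian. Qed.

Lemma zmod_char_unity (i : Iirr H) (g : G) : 'chi_i g ^+ #|G| = 1.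
Proof.
rewrite -(lin_charX (zmod_lin_char i)) ?in_setT // -cardsT expg_cardG ?in_setT //.
exact: lin_char1 (zmod_lin_char i).
Qed.

Lemma zmod_chars_separate (g : G) : g != 0 -> exists i : Iirr H, 'chi_i g != 1.
Proof.
move=> g_neq0; apply/existsP; apply: contraT; rewrite negb_exists => /forallP chi_g1.
have := @second_orthogonality_relation _ H g 1%g (group1 H).
rewrite class1G inE (negPf g_neq0) mulr0n.
under eq_bigr => i _ do
  rewrite (lin_char1 (zmod_lin_char i)) conjC1 mulr1 (eqP (negbNE (chi_g1 i))).
rewrite sumr_const card_Iirr_zmod => /eqP.
by rewrite pnatr_eq0 eqn0Ngt card_zmod_gt0.
Qed.

(* Character values are #|G|-th roots of unity in algC; they are moved to [C] by
   matching a primitive root [z] of algC with a primitive root [zC] of [C]. *)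
Let z : algC := sval (C_prim_root_exists card_zmod_gt0).
Let zP : #|G|.-primitive_root z := svalP (C_prim_root_exists card_zmod_gt0).
Let zC : C := xchoose (prim_root_exists C card_zmod_gt0).
Let zCP : #|G|.-primitive_root zC := xchooseP (prim_root_exists C card_zmod_gt0).

Let to_C (w : algC) : C :=
  if [pick j : 'I_#|G| | z ^+ j == w] is Some j then zC ^+ j else 0.

Let to_C_exp a : to_C (z ^+ a) = zC ^+ a.
Proof.
rewrite /to_C; case: pickP => [j|/(_ (Ordinal (ltn_pmod a card_zmod_gt0)))].
  rewrite (eq_prim_root_expr zP) => /eqP ja.
  by apply/eqP; rewrite (eq_prim_root_expr zCP) ja.
by rewrite /= (prim_expr_mod zP) eqxx.
Qed.

Let zmod_char_exp (i : Iirr H) g : exists a, 'chi_i g = z ^+ a.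
Proof. by have [a ->] := prim_rootP zP (zmod_char_unity i g); exists a. Qed.

Let psi (i : Iirr H) (g : G) := to_C ('chi_i g).

Let psiM i a b : psi i (a + b) = psi i a * psi i b.
Proof.
rewrite /psi -FinRing.zmodMgE (lin_charM (zmod_lin_char i)) ?in_setT //.
have [p ->] := zmod_char_exp i a; have [q ->] := zmod_char_exp i b.
by rewrite -exprD !to_C_exp exprD.
Qed.

Let psi_unit_norm i a : psi i a * (psi i a)^* = 1.
Proof.
have zC_norm : `|zC| = 1.
  apply/eqP; rewrite -(pexpr_eq1 (n := #|G|)) ?normr_ge0 -?normrX
    ?(prim_expr_order zCP) ?normr1 //; exact: card_zmod_gt0.
by rewrite /psi; have [p ->] := zmod_char_exp i a; rewrite to_C_exp -normCK normrX zC_norm !expr1n.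
Qed.

Let psi0 i : psi i 0 = 1.
Proof. by rewrite /psi -FinRing.zmod1gE (lin_char1 (zmod_lin_char i)) -(expr0 z) to_C_exp. Qed.

Let mul_Iirr (i0 i : Iirr H) := cfIirr ('chi_i0 * 'chi_i).

Let mul_IirrE i0 i : 'chi_(mul_Iirr i0 i) = 'chi_i0 * 'chi_i.
Proof. by rewrite cfIirrE // lin_char_irr // rpredM // zmod_lin_char. Qed.

Let mul_Iirr_inj i0 : injective (mul_Iirr i0).
Proof.
move=> a b /(congr1 (fun j => 'chi_j)); rewrite !mul_IirrE => /cfunP eq_ab.
apply/irr_inj/cfunP => x; have := eq_ab x; rewrite !cfunE.
by apply: mulfI; rewrite (lin_char_neq0 (zmod_lin_char i0)) ?in_setT.
Qed.

Let psi_mul_Iirr i0 i g : psi (mul_Iirr i0 i) g = psi i0 g * psi i g.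
Proof.
rewrite /psi mul_IirrE cfunE.
have [p ->] := zmod_char_exp i0 g; have [q ->] := zmod_char_exp i g.
by rewrite -exprD !to_C_exp exprD.
Qed.

Let sum_psi g : \sum_i psi i g = (g == 0)%:R * #|G|%:R.
Proof.
have [->|g_neq0] := eqVneq g 0.
  by under eq_bigr => i _ do rewrite psi0; rewrite sumr_const card_Iirr_zmod mul1r.
have [i0 chi_g] := zmod_chars_separate g_neq0.
have psi_g : psi i0 g != 1.
  move: chi_g; rewrite /psi; have [p ->] := zmod_char_exp i0 g; rewrite to_C_exp.
  by rewrite -{1}(expr0 z) -(expr0 zC) (eq_prim_root_expr zP) (eq_prim_root_expr zCP).
have sum_shift : \sum_i psi i g = psi i0 g * \sum_i psi i g.
  rewrite {1}(reindex_inj (@mul_Iirr_inj i0)) mulr_sumr.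
  by apply: eq_bigr => i _; rewrite psi_mul_Iirr.
have : (1 - psi i0 g) * \sum_i psi i g = 0 by rewrite mulrBl mul1r -sum_shift subrr.
by move/eqP; rewrite mulf_eq0 subr_eq0 eq_sym (negPf psi_g) mul0r => /eqP.
Qed.

Lemma zmod_characters_exist : exists psi : 'I_#|G| -> G -> C,
  [/\ (forall t a b, psi t (a + b) = psi t a * psi t b),
      (forall t a, psi t a * (psi t a)^* = 1) &
      (forall g, \sum_t psi t g = (g == 0)%:R * #|G|%:R)].
Proof.
have e : #|Iirr H| = #|G| := card_Iirr_zmod.
pose h (t : 'I_#|G|) : Iirr H := enum_val (cast_ord (esym e) t).
have h_bij : bijective h.
  exists (fun i => cast_ord e (enum_rank i)) => t; rewrite /h.
    by rewrite enum_valK cast_ordKV.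
  by rewrite cast_ordK enum_rankK.
exists (fun t => psi (h t)); split=> [t a b|t a|g]; [exact: psiM|exact: psi_unit_norm|].
by rewrite -sum_psi (reindex h) //; exact: onW_bij.
Qed.
End ZmodCharacters.

Lemma sidonS (G : finZmodType) (S T : {set G}) : T \subset S -> sidon S -> sidon T.
Proof. by move=> /subsetP sTS S_sidon a b c e /sTS Sa /sTS Sb /sTS Sc /sTS Se; apply: S_sidon. Qed.

Lemma eq_power_sums2 (F : fieldType) (x y u v : F) : 2 != 0 :> F ->
    x + y = u + v -> x ^+ 2 + y ^+ 2 = u ^+ 2 + v ^+ 2 ->
  (x = u /\ y = v) \/ (x = v /\ y = u).
Proof.
move=> two_neq0 e1 e2.
have : 2 * ((x - u) * (x - v)) = 0.
  have -> : 2 * ((x - u) * (x - v)) = (x + y - (u + v)) * (x + y - (u + v) - 2 * y)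
      + (x ^+ 2 + y ^+ 2 - (u ^+ 2 + v ^+ 2)) by ring.
  by rewrite e1 e2 !subrr mul0r addr0.
move/eqP; rewrite mulf_eq0 (negPf two_neq0) /= mulf_eq0 !subr_eq0 => /orP[]/eqP xE.
  by left; split=> //; rewrite xE in e1; apply: addrI e1.
by right; split=> //; rewrite xE addrC in e1; apply: addIr e1.
Qed.

Definition parabola (F : pzSemiRingType) (x : F) : 'rV[F]_2 := \row_(t < 2) x ^+ t.+1.

Lemma parabola_inj (F : pzSemiRingType) : injective (@parabola F).
Proof. by move=> x y /rowP/(_ ord0); rewrite !mxE /= !expr1. Qed.

Lemma parabola_sidon (F : finFieldType) : 2 != 0 :> F ->
  sidon [set parabola x | x : F].
Proof.
move=> two_neq0 _ _ _ _ /imsetP[x _ ->] /imsetP[y _ ->] /imsetP[u _ ->] /imsetP[v _ ->].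
move=> /rowP e; have e1 := e ord0; have e2 := e ord_max; rewrite !mxE /= !expr1 in e1 e2.
by have [[-> ->]|[-> ->]] := eq_power_sums2 two_neq0 e1 e2; last rewrite setUC.
Qed.

Lemma sidon_exists d : exists (G : finZmodType) (S : {set G}), #|S| = d /\ sidon S.
Proof.
have [p ltp p_pr] := prime_above d.+2.
have Fp_nat_inj a b : (a < p)%N -> (b < p)%N -> a%:R = b%:R :> 'F_p -> a = b.
  by move=> ap bp /(congr1 val); rewrite /= !(val_Fp_nat p_pr) !modn_small.
have two_neq0 : 2 != 0 :> 'F_p.
  apply/eqP => e; suff : 2%N = 0%N by [].
  by apply: (Fp_nat_inj 2 0) => //; lia.
exists [the finZmodType of 'rV['F_p]_2], [set parabola i%:R | i : 'I_d]; split.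
  rewrite card_imset ?card_ord // => i j /parabola_inj eq_ij.
  by apply/val_inj/(Fp_nat_inj _ _ _ _ eq_ij); [have := ltn_ord i | have := ltn_ord j]; lia.
apply: sidonS _ (parabola_sidon two_neq0).
by apply/subsetP => _ /imsetP[i _ ->]; apply: imset_f.
Qed.

Lemma sidon_addE (G : finZmodType) (S : {set G}) (I : eqType) (s : I -> G) :
    sidon S -> injective s -> (forall i, s i \in S) -> forall i j k l,
  (s i + s j == s k + s l) = ((i == k) && (j == l)) || ((i == l) && (j == k)).
Proof.
move=> S_sidon s_inj sS i j k l; apply/eqP/idP => [e|]; last first.
  by case/orP => /andP[/eqP-> /eqP->] //; rewrite addrC.
have /setP/(_ (s i)) := S_sidon _ _ _ _ (sS i) (sS j) (sS k) (sS l) e.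
rewrite !inE eqxx /= => /esym/orP[]/eqP/s_inj ik; subst.
  by have /s_inj -> : s j = s l := addrI _ e; rewrite !eqxx.
have /s_inj -> : s j = s k by apply: (addrI (s l)); rewrite e addrC.
by rewrite !eqxx orbT.
Qed.

Lemma natr_orb_andb (R : nzSemiRingType) (a b : bool) :
  (a || b)%:R + (a && b)%:R = a%:R + b%:R :> R.
Proof. by case: a; case: b; rewrite /= ?addr0 ?add0r. Qed.

Lemma eq_all4E (T : eqType) (i j k l : T) :
  [&& i == j, i == k & i == l] = ((i == k) && (j == l)) && ((i == l) && (j == k)).
Proof.
apply/and3P/andP => [[/eqP<- /eqP<- /eqP<-]|[/andP[/eqP<- /eqP<-] /andP[/eqP<- _]]];
  by rewrite !eqxx.
Qed.

(* Stated for [Num.conj] on [R[i]]: in this form they rewrite terms where the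
   generic [rmorphM] and the [conjc]-headed [conjc_real] fail to match. *)
Lemma conj_complexM (R : realType) (a b : R[i]) : (a * b)^* = a^* * b^*.
Proof. exact: rmorphM. Qed.

Lemma conj_real_complex (R : realType) (r : R) : (r%:C%C)^* = r%:C%C.
Proof. exact: conjc_real. Qed.

Section SidonDesign.
Variables (R : realType) (G : finZmodType) (d : nat) (S : {set G}).
Hypotheses (d_gt0 : (0 < d)%N) (cardS : #|S| = d) (S_sidon : sidon S).
Variable psi : 'I_#|G| -> G -> R[i].
Hypotheses (psiD : forall t a b, psi t (a + b) = psi t a * psi t b)
           (psi_unit : forall t a, psi t a * (psi t a)^* = 1)
           (sum_psi : forall g, \sum_t psi t g = (g == 0)%:R * #|G|%:R).

Let s (i : 'I_d) : G := enum_val (cast_ord (esym cardS) i).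

Let psi0 t : psi t 0 = 1.
Proof. by rewrite -[LHS]mulr1 -(psi_unit t 0) mulrA -psiD addr0 psi_unit. Qed.

Let psiN t a : (psi t a)^* = psi t (- a).
Proof. by rewrite -[LHS]mul1r -(psi0 t) -(subrr a) psiD mulrAC psi_unit mul1r. Qed.

Let c : R := Num.sqrt d%:R.

Let sqr_c : c ^+ 2 = d%:R.
Proof. by rewrite sqr_sqrtr ?ler0n. Qed.

Let x (t : 'I_(#|G| + d)) (i : 'I_d) : R[i] :=
  match split t with inl u => (c^-1)%:C%C * psi u (s i) | inr a => (a == i)%:R end.

Let w0 : R := d%:R ^+ 2 / (2 * #|G|%:R).

Let w (t : 'I_(#|G| + d)) : R := if split t is inl _ then w0 else 2^-1.

Let xl u i : x (lshift d u) i = (c^-1)%:C%C * psi u (s i).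
Proof. by rewrite /x (unsplitK (inl _ u)). Qed.

Let xr a i : x (rshift #|G| a) i = (a == i)%:R.
Proof. by rewrite /x (unsplitK (inr _ a)). Qed.

Lemma sidon_design_unit t : unit_vec (x t).
Proof.
rewrite /unit_vec -(splitK t); case: (split t) => [u|a] /=.
  under eq_bigr => i _ do rewrite xl normCK rmorphM /= conj_real_complex mulrACA psi_unit mulr1.
  rewrite sumr_const card_ord -rmorphM -rmorphMn /=; congr (_%:C%C).
  by rewrite -expr2 exprVn sqr_c -mulr_natr mulVf // pnatr_eq0 -lt0n.
rewrite (bigD1 a) //= big1 => [|i ai]; first by rewrite xr eqxx normr1 expr1n addr0.
by rewrite xr eq_sym (negPf ai) normr0 expr0n.
Qed.

Lemma sidon_design_weight_ge0 t : 0 <= w t.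
Proof.
rewrite /w; case: (split t) => _; last by rewrite invr_ge0 ler0n.
by rewrite divr_ge0 ?exprn_ge0 ?mulr_ge0 ?ler0n.
Qed.

Let s_inj : injective s.
Proof. by move=> i j /enum_val_inj /cast_ord_inj. Qed.

Let s_in i : s i \in S.
Proof. exact: enum_valP. Qed.

Lemma sidon_design_sum i j k l :
  \sum_t (w t)%:C%C * (x t i * x t j * (x t k * x t l)^*) = sym_proj R i j k l.
Proof.
rewrite big_split_ord /=.
have char_part : \sum_(u < #|G|) (w (lshift d u))%:C%C *
    (x (lshift d u) i * x (lshift d u) j * (x (lshift d u) k * x (lshift d u) l)^*)
    = 2^-1 * (s i + s j == s k + s l)%:R.
  transitivity ((w0 * c^-1 ^+ 4)%:C%C * \sum_(u < #|G|) psi u (s i + s j - (s k + s l))).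
    rewrite mulr_sumr; apply: eq_bigr => u _.
    rewrite /w (unsplitK (inl _ u)) !xl !conj_complexM !conj_real_complex !psiN opprD !psiD.
    by rewrite !rmorphM /= ?rmorphXn /=; ring.
  have dn0 : (d%:R : R) != 0 by rewrite pnatr_eq0 -lt0n.
  have Gn0 : (#|G|%:R : R) != 0 by rewrite pnatr_eq0 -lt0n card_zmod_gt0.
  have scale : w0 * c^-1 ^+ 4 * #|G|%:R = 2^-1.
    by rewrite /w0 exprVn -[4%N]/(2 * 2)%N exprM sqr_c; field; rewrite dn0 Gn0.
  rewrite sum_psi subr_eq0 mulrCA [RHS]mulrC; congr (_ * _).
  by rewrite -(rmorph_nat (real_complex R) 2) -fmorphV -scale [RHS]rmorphM /= rmorph_nat.
have basis_part : \sum_(a < d) (w (rshift #|G| a))%:C%C *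
    (x (rshift #|G| a) i * x (rshift #|G| a) j * (x (rshift #|G| a) k * x (rshift #|G| a) l)^*)
    = 2^-1 * [&& i == j, i == k & i == l]%:R.
  rewrite (bigD1 i) //= big1 => [|a ai].
    rewrite /w (unsplitK (inr _ i)) !xr -!natrM conjC_nat -natrM eqxx !mulnb addr0.
    by rewrite fmorphV rmorph_nat.
  by rewrite !xr -!natrM conjC_nat -natrM !mulnb (negPf ai) mulr0.
rewrite char_part basis_part (sidon_addE S_sidon s_inj s_in) eq_all4E -mulrDr.
by rewrite natr_orb_andb /sym_proj mulrC.
Qed.

Lemma sidon_design :
  exists x : 'I_(#|G| + d) -> 'I_d -> R[i], (forall t, unit_vec (x t)) /\ weighted_2design x.
Proof.
exists x; split; first exact: sidon_design_unit.
by exists w; split; [exact: sidon_design_weight_ge0 | exact: sidon_design_sum].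
Qed.

End SidonDesign.

Lemma least_nat_le (P : nat -> Prop) n : P n -> (least_nat P <= n)%N.
Proof.
move=> Pn; rewrite /least_nat; case: pselect => [ex|[]]; last by exists n.
by case: ex_minnP => k _ /(_ n); apply; apply: asboolT.
Qed.

Lemma least_natP (P : nat -> Prop) : (exists n, P n) -> P (least_nat P).
Proof.
move=> ex; rewrite /least_nat; case: pselect => [ex'|//].
by case: ex_minnP => k /asboolP.
Qed.

Lemma n_design0 (R : realType) : n_design R 0 = 0%N.
Proof.
apply/eqP; rewrite -leqn0; apply: least_nat_le.
by exists (fun _ _ => 0); split; [case | exists (fun _ => 0); split; case].
Qed.

Lemma m_sidonP d :
  exists G : finZmodType, #|G| = m_sidon d /\ exists S : {set G}, #|S| = d /\ sidon S.
Proof.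
apply: (least_natP (P := fun m => exists G : finZmodType,
  #|G| = m /\ exists S : {set G}, #|S| = d /\ sidon S)).
by have [G [S S_sidon]] := sidon_exists d; exists #|G|, G; split=> //; exists S.
Qed.

Theorem mainTheorem2 (R : realType) (d : nat) :
  (n_design R d <= m_sidon d + d)%N.
Proof.
have [->|d_gt0] := posnP d; first by rewrite n_design0.
have [G [cardG [S [cardS S_sidon]]]] := m_sidonP d.
have [psi [psiD psi_unit sum_psi]] := zmod_characters_exist R[i] G.
rewrite -cardG; apply: least_nat_le.
exact (sidon_design d_gt0 cardS S_sidon psiD psi_unit sum_psi).
Qed.
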